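(* Let $\mathcal G=G(n;S)$ be an integral circulant graph with $n$ odd, and let $A$ be its adjacency matrix. Then there do not exist $0\leq a<b\leq n-1$ and real $t>0$ such that $\left|\left(e^{\iota A t}\right)_{a,b}\right|=1$, where $\iota=\sqrt{-1}$. In other words, an integral circulant graph with an odd number of vertices does not admit perfect state transfer.
   Context: For a set $S\subseteq\{1,\dots,n-1\}$ with $s\in S$ iff $n-s\in S$, the circulant graph $G(n;S)$ is the undirected graph on vertex set $\mathbb{Z}_n=\{0,\dots,n-1\}$ in which $i$ and $j$ are adjacent iff $i-j \bmod n\in S$. A graph is integral if all eigenvalues of its adjacency matrix are integers. Perfect state transfer between vertices $a$ and $b$ means there is $0<t<\infty$ with $|\langle a|e^{\iota A t}|b\rangle|=1$, where $\langle a|M|b\rangle$ denotes the $(a,b)$ entry of the matrix $M$. *)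

From HB Require Import structures.
From mathcomp Require Import all_boot all_order all_algebra.
From mathcomp Require Import complex.
From mathcomp Require Import reals.
Set Implicit Arguments. Unset Strict Implicit. Unset Printing Implicit Defensive.
Import Order.TTheory GRing.Theory Num.Theory.
Local Open Scope ring_scope.
Local Open Scope complex_scope.

Definition diffmod (n : nat) (i j : 'I_n) : nat := ((i + (n - j)) %% n)%N.

Definition connection_set (n : nat) (S : {set 'I_n}) : Prop :=
  (forall s, s \in S -> (0 < val s)%N) /\
  (forall s, s \in S -> exists2 s', s' \in S & val s' = ((n - val s) %% n)%N).

Definition circ_adj (T : nzRingType) (n : nat) (S : {set 'I_n}) : 'M[T]_n :=
  \matrix_(i, j) ((([exists s in S, val s == diffmod i j]) : nat)%:R).

Definition integral_circulant (R : realType) (n : nat) (S : {set 'I_n}) : Prop :=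
  forall lam : R[i], eigenvalue (circ_adj R[i] S) lam -> exists z : int, lam = z%:~R.

Definition expiAt_partial (R : realType) (n : nat) (A : 'M[R]_n) (t : R) (N : nat)
  : 'M[R[i]]_n :=
  \sum_(k < N) ((('i * t%:C) ^+ k / (k`!)%:R) *: (map_mx (fun x : R => x%:C) A) ^+ k).

Definition cvgC (R : realType) (u : nat -> R[i]) (z : R[i]) : Prop :=
  forall e : R, 0 < e -> exists N0 : nat, forall N : nat, (N0 <= N)%N ->
    `|u N - z| < e%:C.

(* (a,b) entry of e^{i A t}: the limit of the (a,b) entries of the partial sums.
   exp_entry A t a b z  <->  (e^{i A t})_{a,b} = z *)
Definition exp_entry (R : realType) (n : nat) (A : 'M[R]_n) (t : R) (a b : 'I_n)
  (z : R[i]) : Prop :=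
  cvgC (fun N => expiAt_partial A t N a b) z.

Definition perfect_state_transfer (R : realType) (n : nat) (A : 'M[R]_n) (a b : 'I_n)
  : Prop :=
  exists t : R, 0 < t /\ exists z : R[i], exp_entry A t a b z /\ `|z| = 1.

From HB Require Import structures.
From mathcomp Require Import all_boot all_order all_algebra.
From mathcomp Require Import complex reals.
From mathcomp Require Import ring lra.
Import Order.TTheory GRing.Theory Num.Theory.
Local Open Scope ring_scope.
Local Open Scope complex_scope.
Set Implicit Arguments. Unset Strict Implicit. Unset Printing Implicit Defensive.

(* Write U = e^{iAt}.  As A is real symmetric, U is symmetric and unitary; as
   the graph is circulant, U (i + c) (j + c) = U i j.  If |U a b| = 1 with
   a <> b, put c = b - a: then U b a = U a b and U b (b + c) = U a b, and
   b + c <> a because 2c <> 0 in Z/nZ for n odd.  So row b of U has two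
   entries of modulus 1, contradicting unitarity.
   Since e^{iAt} is only given as the limit of the partial sums U_N, unitarity
   is used in the quantitative form: the squared norm of a row of U_N is 1
   plus the degree >= N part of the Cauchy product of the series of e^{iAt}
   and e^{-iAt}, which is O(2^-N). *)

Section Circulant.
Variable n : nat.
Implicit Types (i j : 'I_n.+1) (S : {set 'I_n.+1}).

Lemma diffmodE i j : diffmod i j = i - j :> nat.
Proof. by rewrite /diffmod /= modnDmr. Qed.

Lemma Zp_double_eq0 (x : 'I_n.+1) : odd n.+1 -> x + x = 0 -> x = 0.
Proof.
move=> n_odd /(congr1 val) /= /eqP; rewrite -/(dvdn _ _) addnn -mul2n.
rewrite Gauss_dvdr ?coprimen2 // /dvdn modn_small // => x0.
exact/val_inj/eqP.
Qed.

Lemma connection_setN S s : connection_set S -> s \in S -> - s \in S.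
Proof.
case=> _ symS /symS [s' s'S s'E].
by rewrite (_ : - s = s') //; apply: val_inj.
Qed.

Lemma circ_adjE (T : nzRingType) S i j :
  circ_adj T S i j = (i - j \in S)%:R.
Proof.
rewrite mxE; congr (nat_of_bool _)%:R.
apply/existsP/idP => [[s /andP[sS /eqP]]|].
  by rewrite diffmodE => /val_inj <-.
by exists (i - j); rewrite diffmodE eqxx andbT.
Qed.

Definition circulant (T : Type) (A : 'M[T]_n.+1) :=
  forall c i j, A (i + c) (j + c) = A i j.

Lemma circulant_circ_adj (T : nzRingType) S : circulant (circ_adj T S).
Proof. by move=> c i j; rewrite !circ_adjE opprD addrACA subrr addr0. Qed.

Lemma circ_adj_tr (T : nzRingType) S :
  connection_set S -> (circ_adj T S)^T = circ_adj T S.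
Proof.
move=> symS; apply/matrixP => i j.
rewrite mxE !circ_adjE; congr (nat_of_bool _)%:R.
by apply/idP/idP => /(connection_setN symS); rewrite opprB.
Qed.

End Circulant.

Lemma trmxX (T : comPzRingType) n (A : 'M[T]_n) k : (A ^+ k)^T = A^T ^+ k.
Proof.
elim: k => [|k IHk]; first by rewrite !expr0 trmx1.
by rewrite exprS exprSr -!mulmxE trmx_mul IHk.
Qed.

Lemma circulantX (T : pzRingType) n (A : 'M[T]_n.+1) k :
  circulant A -> circulant (A ^+ k).
Proof.
move=> circA c; elim: k => [|k IHk] i j.
  by rewrite !expr0 !mxE (inj_eq (addIr c)).
rewrite !exprS -!mulmxE !mxE (reindex_inj (addIr c)) /=.
by apply: eq_bigr => l _; rewrite circA IHk.
Qed.

Lemma mxX_norm_le (T : numDomainType) n (A : 'M[T]_n) k i j :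
  (forall i j, `|A i j| <= 1) -> `|(A ^+ k) i j| <= n%:R ^+ k.
Proof.
move=> A_le1; elim: k i j => [|k IHk] i j.
  by rewrite expr0 mxE; case: (i == j); rewrite ?normr1 ?normr0.
rewrite exprS -mulmxE mxE (le_trans (ler_norm_sum _ _ _)) //.
rewrite exprS mulr_natl -[X in _ *+ X]card_ord -sumr_const; apply: ler_sum => l _.
by rewrite normrM -[n%:R ^+ k]mul1r ler_pM.
Qed.

Lemma sqr_norm_add_le_sum (T : numDomainType) (I : finType) (F : I -> T) i j :
  i != j -> `|F i| ^+ 2 + `|F j| ^+ 2 <= \sum_k `|F k| ^+ 2.
Proof.
move=> neq_ij; rewrite (bigD1 i) // (bigD1 j) /= 1?eq_sym // addrA lerDl.
by apply: sumr_ge0 => k _; rewrite exprn_ge0.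
Qed.

Section AntidiagonalSums.
Variables (V : nmodType) (f : nat -> nat -> V).

Lemma sum_triangle_antidiagonal N :
  \sum_(0 <= k < N) \sum_(0 <= l < N - k) f k l =
  \sum_(0 <= m < N) \sum_(0 <= k < m.+1) f k (m - k).
Proof.
elim: N => [|N IHN]; first by rewrite !big_geq.
rewrite [RHS]big_nat_recr //= -IHN.
rewrite (@eq_big_nat _ _ _ 0 N.+1 _
  (fun k => \sum_(0 <= l < N - k) f k l + f k (N - k))); last first.
  by move=> k /andP[_ ltkN]; rewrite subSn // big_nat_recr.
rewrite big_split /= [X in X + _]big_nat_recr //= subnn.
by rewrite [\sum_(0 <= l < 0) _]big_geq // addr0.
Qed.

Lemma sum_square_antidiagonal N :
  \sum_(0 <= k < N) \sum_(0 <= l < N) f k l =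
  \sum_(0 <= m < N) \sum_(0 <= k < m.+1) f k (m - k) +
  \sum_(0 <= k < N) \sum_(0 <= l < N | (N <= k + l)%N) f k l.
Proof.
rewrite -sum_triangle_antidiagonal -big_split /=.
apply: eq_big_nat => k _.
rewrite (bigID (fun l => k + l < N)%N) /=; congr (_ + _).
  rewrite (big_nat_widen 0 (N - k) N) ?leq_subr //.
  by apply: eq_bigl => l; rewrite ltn_subRL.
by apply: eq_bigl => l; rewrite -leqNgt.
Qed.

End AntidiagonalSums.

Lemma expn_le_fact L j : (L ^ j <= L ^ L * j`!)%N.
Proof.
elim: j => [|j IHj]; first by rewrite muln1 expn_gt0 orbC; case: L.
have [le_jL|lt_Lj] := leqP j.+1 L.
  have [->|L_gt0] := posnP L; first by rewrite exp0n.
  by rewrite (leq_trans (leq_pexp2l L_gt0 le_jL)) // leq_pmulr ?fact_gt0.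
by rewrite expnS factS mulnCA leq_mul // ltnW.
Qed.

Section ExpTermBounds.
Variables (R : realFieldType) (x : R) (L : nat).
Hypotheses (x_ge0 : 0 <= x) (x_le : 8 * x <= L%:R).

Lemma exp_term_le j : x ^+ j / j`!%:R <= (L ^ L)%:R / 8 ^+ j.
Proof.
have fact_gt0 : 0 < j`!%:R :> R by rewrite ltr0n fact_gt0.
rewrite ler_pdivrMr // mulrAC ler_pdivlMr ?exprn_gt0 // mulrC -exprMn.
apply: (le_trans (y := L%:R ^+ j)); first by rewrite lerXn2r ?nnegrE ?mulr_ge0.
by rewrite -natrX -natrM ler_nat expn_le_fact.
Qed.

Lemma exp_tail_le N :
  \sum_(0 <= k < N) \sum_(0 <= l < N | (N <= k + l)%N)
     (x ^+ k / k`!%:R) * (x ^+ l / l`!%:R) <= ((L ^ L) ^ 2)%:R / 2 ^+ N.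
Proof.
set B : R := (L ^ L)%:R.
have term_ge0 k : 0 <= x ^+ k / k`!%:R by rewrite divr_ge0 ?exprn_ge0.
(* Each factor is at most B / 8^j, and the N^2 terms are absorbed by
   N^2 2^N <= 8^N. *)
apply: (le_trans (y := \sum_(0 <= k < N) \sum_(0 <= l < N) (B ^+ 2 / 8 ^+ N))).
  apply: ler_sum => k _; rewrite big_mkcond; apply: ler_sum => l _.
  case: ifP => [le_N_kl|_]; last by rewrite divr_ge0 ?exprn_ge0.
  apply: (le_trans (y := (B / 8 ^+ k) * (B / 8 ^+ l))).
    by apply: ler_pM; rewrite ?exp_term_le.
  rewrite mulrACA -expr2 -invfM -exprD ler_wpM2l ?exprn_ge0 //.
  by rewrite lef_pV2 ?posrE ?exprn_gt0 // ler_eXn2l // ltr1n.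
rewrite !sumr_const_nat subn0 -mulrnA natrX -/B -[_ *+ (N * N)]mulr_natr.
have count_le : (N * N)%:R * 2 ^+ N <= 8 ^+ N :> R.
  rewrite -!natrX -natrM ler_nat (_ : 8 = 2 * 2 * 2)%N // !expnMn.
  by rewrite leq_mul // leq_mul // ltnW // ltn_expl.
rewrite -mulrA ler_wpM2l ?exprn_ge0 // mulrC ler_pdivrMr ?exprn_gt0 //.
by rewrite mulrC ler_pdivlMr ?exprn_gt0.
Qed.

End ExpTermBounds.

Section ExpiCoef.
Variable R : realType.
Implicit Types (t : R) (k m : nat).

Definition expi_coef t k : R[i] := ('i * t%:C) ^+ k / k`!%:R.

Lemma normC_real (x : R) : `|x%:C| = `|x|%:C.
Proof.
have [x_ge0|x_lt0] := leP 0 x; first by rewrite !ger0_norm ?ler0c.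
by rewrite !ltr0_norm ?ltcR // rmorphN.
Qed.

Lemma conj_expi_coef t k : (expi_coef t k)^* = expi_coef (- t) k.
Proof.
rewrite /expi_coef rmorphM rmorphXn fmorphV rmorph_nat; congr (_ ^+ _ * _).
by simpc.
Qed.

Lemma norm_expi_coef t k : `|expi_coef t k| = (`|t| ^+ k / k`!%:R)%:C.
Proof.
rewrite /expi_coef normrM normrX normrM normCi mul1r normC_real.
rewrite normfV normr_nat.
by rewrite rmorphM rmorphXn fmorphV rmorph_nat.
Qed.

Lemma expi_coef_antidiagonal t m :
  \sum_(0 <= k < m.+1) expi_coef t k * expi_coef (- t) (m - k) = (m == 0)%:R.
Proof.
rewrite /expi_coef; set x := 'i * t%:C.
have -> : 'i * (- t)%:C = - x by rewrite rmorphN mulrN.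
have fact_neq0 j : j`!%:R != 0 :> R[i] by rewrite pnatr_eq0 -lt0n fact_gt0.
transitivity ((- x + x) ^+ m / m`!%:R); last first.
  by rewrite addNr expr0n; case: m => [|m]; rewrite ?divr1 ?mul0r.
rewrite exprDn big_mkord mulr_suml.
apply: eq_bigr => -[k /=]; rewrite ltnS => le_km _.
have bin_neq0 : 'C(m, k)%:R != 0 :> R[i] by rewrite pnatr_eq0 -lt0n bin_gt0.
rewrite -(bin_fact le_km) !natrM mulr_natr.
by field; rewrite bin_neq0 !fact_neq0.
Qed.

End ExpiCoef.

Section ExpiAtPartial.
Variables (R : realType) (n : nat) (A : 'M[R]_n).
Implicit Types (t : R) (N : nat) (i j b : 'I_n).

Lemma expiAt_partialE t N i j :
  expiAt_partial A t N i j = \sum_(k < N) expi_coef t k * ((A ^+ k) i j)%:C.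
Proof.
rewrite summxE; apply: eq_bigr => k _.
by rewrite mxE -(rmorphXn (map_mx (real_complex R))) mxE.
Qed.

Lemma conj_expiAt_partial t N i j :
  (expiAt_partial A t N i j)^* = expiAt_partial A (- t) N i j.
Proof.
rewrite [in LHS]expiAt_partialE [RHS]expiAt_partialE rmorph_sum.
apply: eq_bigr => k _.
rewrite rmorphM; congr (_ * _); [exact: conj_expi_coef | exact: conjc_real].
Qed.

Hypothesis A_sym : A^T = A.

Lemma expiAt_partial_sym t N i j :
  expiAt_partial A t N j i = expiAt_partial A t N i j.
Proof.
rewrite [LHS]expiAt_partialE [RHS]expiAt_partialE; apply: eq_bigr => k _.
by rewrite -[in LHS]A_sym -trmxX mxE.
Qed.

Lemma sum_sqr_norm_expiAt_partial_cauchy t N b :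
  \sum_j `|expiAt_partial A t N b j| ^+ 2 =
  \sum_(0 <= k < N) \sum_(0 <= l < N)
     expi_coef t k * expi_coef (- t) l * ((A ^+ (k + l)) b b)%:C.
Proof.
transitivity (\sum_j \sum_(k < N) \sum_(l < N)
    expi_coef t k * expi_coef (- t) l * ((A ^+ k) b j * (A ^+ l) j b)%:C).
  apply: eq_bigr => j _.
  rewrite sqr_normc conj_expiAt_partial [X in _ * X](expiAt_partial_sym (- t)).
  rewrite [X in _ * X]expiAt_partialE [X in X * _]expiAt_partialE mulr_suml.
  apply: eq_bigr => k _; rewrite mulr_sumr; apply: eq_bigr => l _.
  by rewrite rmorphM mulrACA.
rewrite exchange_big big_mkord; apply: eq_bigr => k _.
rewrite exchange_big big_mkord; apply: eq_bigr => l _.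
by rewrite exprD -mulmxE mxE rmorph_sum mulr_sumr.
Qed.

End ExpiAtPartial.

Lemma circulant_expiAt_partial (R : realType) n (A : 'M[R]_n.+1) t N :
  circulant A -> circulant (expiAt_partial A t N).
Proof.
move=> circA c i j; rewrite [LHS]expiAt_partialE [RHS]expiAt_partialE.
by apply: eq_bigr => k _; rewrite circulantX.
Qed.

Section ExpiTail.
Variables (R : realType) (n : nat) (A : 'M[R]_n).
Implicit Types (t : R) (N : nat) (b : 'I_n).

Definition expi_tail t N b :=
  \sum_(0 <= k < N) \sum_(0 <= l < N | (N <= k + l)%N)
     expi_coef t k * expi_coef (- t) l * ((A ^+ (k + l)) b b)%:C.

Lemma sum_sqr_norm_expiAt_partialE t N b : A^T = A -> (0 < N)%N ->
  \sum_j `|expiAt_partial A t N b j| ^+ 2 = 1 + expi_tail t N b.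
Proof.
move=> A_sym N_gt0.
rewrite sum_sqr_norm_expiAt_partial_cauchy // sum_square_antidiagonal.
congr (_ + _).
transitivity (\sum_(0 <= m < N) (m == 0)%:R * ((A ^+ m) b b)%:C).
  apply: eq_big_nat => m _; rewrite -(expi_coef_antidiagonal t m) mulr_suml.
  by apply: eq_big_nat => k /andP[_ le_km]; rewrite subnKC.
rewrite big_ltn // big1_seq ?addr0 => [|m /andP[_]]; last first.
  by rewrite mem_iota => /andP[m_gt0 _]; rewrite eqn0Ngt m_gt0 mul0r.
by rewrite mul1r expr0 mxE eqxx.
Qed.

Lemma norm_expi_tail_le (L : nat) t N b :
  (forall i j, `|A i j| <= 1) -> 8 * (`|t| * n%:R) <= L%:R ->
  `|expi_tail t N b| <= (((L ^ L) ^ 2)%:R / 2 ^+ N)%:C.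
Proof.
move=> A_le1 t_le; set x := `|t| * n%:R.
have x_ge0 : 0 <= x by rewrite mulr_ge0.
apply: le_trans (_ : _ <= (\sum_(0 <= k < N) \sum_(0 <= l < N | (N <= k + l)%N)
     (x ^+ k / k`!%:R) * (x ^+ l / l`!%:R))%:C) _; last first.
  by rewrite lecR exp_tail_le.
rewrite rmorph_sum (le_trans (ler_norm_sum _ _ _)) //; apply: ler_sum => k _.
rewrite rmorph_sum (le_trans (ler_norm_sum _ _ _)) //; apply: ler_sum => l _.
rewrite normrM (normrM (expi_coef t k)) !norm_expi_coef normC_real normrN.
rewrite -!rmorphM lecR.
have -> : x ^+ k / k`!%:R * (x ^+ l / l`!%:R) =
    `|t| ^+ k / k`!%:R * (`|t| ^+ l / l`!%:R) * n%:R ^+ (k + l).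
  by rewrite /x exprD !exprMn; ring.
by rewrite ler_wpM2l ?mxX_norm_le // mulr_ge0 ?divr_ge0 ?exprn_ge0 ?ler0n.
Qed.

End ExpiTail.

Lemma sum_sqr_norm_expiAt_partial_le
    (R : realType) n (A : 'M[R]_n) (L : nat) t N b :
  A^T = A -> (forall i j, `|A i j| <= 1) ->
  8 * (`|t| * n%:R) <= L%:R -> (0 < N)%N ->
  \sum_j `|expiAt_partial A t N b j| ^+ 2 <= 1 + (((L ^ L) ^ 2)%:R / 2 ^+ N)%:C.
Proof.
move=> A_sym A_le1 t_le N_gt0; rewrite sum_sqr_norm_expiAt_partialE //.
have sum_ge0 : 0 <= 1 + expi_tail A t N b.
  rewrite -sum_sqr_norm_expiAt_partialE //.
  by apply: sumr_ge0 => j _; rewrite exprn_ge0.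
rewrite -(ger0_norm sum_ge0) (le_trans (ler_normD _ _)) // normr1 lerD2l.
exact: norm_expi_tail_le.
Qed.

Lemma cvgC_norm1_sqr_norm_gt (R : realType) (u : nat -> R[i]) z (K : nat) :
  cvgC u z -> `|z| = 1 ->
  exists2 N, (0 < N)%N & 1 + (K%:R / 2 ^+ N)%:C < 2 * `|u N| ^+ 2.
Proof.
move=> /(_ (8^-1)) [|N0 u_near]; first by rewrite invr_gt0.
move=> z1; exists (N0 + 4 * K).+1 => //.
set N := (N0 + 4 * K).+1.
have K_small : K%:R / 2 ^+ N <= 4^-1 :> R.
  rewrite ler_pdivrMr ?exprn_gt0 // mulrC ler_pdivlMr // -natrX -natrM ler_nat.
  rewrite mulnC (leq_trans _ (ltnW (ltn_expl N (ltnSn 1)))) //.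
  by rewrite ltnW // ltnS leq_addl.
have := u_near N (leq_trans (leq_addr _ _) (leqnSn _)).
have : `|z| <= `|u N| + `|u N - z|.
  by rewrite -[X in `|X|](subKr (u N)) ler_normB.
have := normr_ge0 (u N).
rewrite z1; have [p ->] := complex_realP _ (normr_real (u N)).
have [d ->] := complex_realP _ (normr_real (u N - z)).
have -> : 2 * p%:C ^+ 2 = (2 * p ^+ 2)%:C by rewrite rmorphM rmorphXn rmorph_nat.
rewrite -(rmorph1 (real_complex R)) -!rmorphD ler0c lecR !ltcR.
move=> p_ge0 le_1_pd d_lt; nra.
Qed.

Unset Implicit Arguments.
Local Close Scope complex_scope.

Theorem proposition1 (R : realType) (n : nat) (S : {set 'I_n}) :
  odd n -> connection_set S -> integral_circulant R S ->
  ~ (exists (a b : 'I_n), (a < b)%N /\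
       perfect_state_transfer (circ_adj R S) a b).
Proof.
case: n S => [|n] S n_odd symS _ [a [b [lt_ab [t [_ [z [U_ab z1]]]]]]].
  by case: a lt_ab U_ab => ? ?.
set A := circ_adj R S; set U := expiAt_partial A t.
have A_le1 i j : `|A i j| <= 1.
  by rewrite /A circ_adjE normr_nat lern1; case: (_ \in _).
have [L t_le] : exists L : nat, 8 * (`|t| * n.+1%:R) <= L%:R.
  exists (Num.Def.archi_bound (8 * (`|t| * n.+1%:R))).
  by apply/ltW/archi_boundP; rewrite !mulr_ge0.
set b' := b + (b - a).
have b'_neq_a : b' != a.
  apply: contraTneq lt_ab => b'_a.
  have /(Zp_double_eq0 n_odd)/eqP : (b - a) + (b - a) = 0.
    by rewrite addrAC -/b' b'_a subrr.
  by rewrite subr_eq0 => /eqP ->; rewrite ltnn.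
have U_ba N : U N b a = U N a b by rewrite /U expiAt_partial_sym ?circ_adj_tr.
have U_bb' N : U N b b' = U N a b.
  have := circulant_expiAt_partial t N (circulant_circ_adj R S) (b - a) a b.
  by rewrite [a + _]addrC subrK.
have [N N_gt0] := cvgC_norm1_sqr_norm_gt ((L ^ L) ^ 2) U_ab z1.
apply/negP; rewrite -/U.
have := le_trans (sqr_norm_add_le_sum (U N b) b'_neq_a)
  (sum_sqr_norm_expiAt_partial_le b (circ_adj_tr R symS) A_le1 t_le N_gt0).
by rewrite U_ba U_bb' [2 * _]mulr_natl mulr2n => /le_gtF ->.
Qed.
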